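(* Let $\mathcal{X}$ be finite and $\mathcal{Y}=\{0,1\}$, with a single receiver. For any $\epsilon$ with $0<\epsilon<\min_{i\in[m]}\mathrm{len}(J_i)$ and any randomized predictor $f\in\Delta(\mathcal{H}_{\mathrm{all}})$ that is $\gamma$-decision calibrated, there exists a randomized predictor $f'\in\Delta(\mathcal{H}_\epsilon)$ such that (1) the sender obtains the same expected utility under $f$ and $f'$, i.e. $\mathbb{E}_{h\sim f}\mathbb{E}_{\mathcal{D}}[\sum_a u(a,y)b(h(x),a)]=\mathbb{E}_{h\sim f'}\mathbb{E}_{\mathcal{D}}[\sum_a u(a,y)b(h(x),a)]$, and (2) $f'$ is $(\gamma+\epsilon)$-decision calibrated.
   Context: $(x,y)\sim\mathcal{D}$ on $\mathcal{X}\times\{0,1\}$, $\mathcal{X}$ finite. The receiver has actions $\mathcal{A}=\{a_1,\dots,a_m\}$ and utility $v:\mathcal{A}\times\{0,1\}\to[0,1]$; the sender has utility $u:\mathcal{A}\times\{0,1\}\to[0,1]$. For a prediction $p\in[0,1]$, the receiver's best response is $\arg\max_a\mathbb{E}_{y\sim\mathrm{Ber}(p)}[v(a,y)]$, ties broken in favor of the sender; $b(p,a)=1$ if $a$ is this best response and $0$ otherwise. $J_i=\{p\in[0,1]:a_i\text{ is the best response to }p\}$; each $J_i$ is an interval and $\{J_i\}$ partitions $[0,1]$. $\mathcal{Z}$ is the set of thresholds between adjacent best-response intervals, and $\Theta=\{\Pr[y=1\mid x]:x\in\mathcal{X}\}$. $S_\epsilon=(\{0,\epsilon,2\epsilon,\dots\}\cap[0,1])\cup\mathcal{Z}\cup\Theta$.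 $\mathcal{H}_{\mathrm{all}}$ is the set of all functions $\mathcal{X}\to[0,1]$ and $\mathcal{H}_\epsilon=\{h:\mathcal{X}\to S_\epsilon\}$. A randomized predictor $f$ (distribution over such functions) is $\gamma$-decision calibrated if $|\mathbb{E}_{h\sim f}\mathbb{E}_{(x,y)\sim\mathcal{D}}[(y-h(x))b(h(x),a)]|\le\gamma$ for every $a\in\mathcal{A}$. *)

From HB Require Import structures.
From mathcomp Require Import all_boot all_order all_algebra.
From mathcomp Require Import all_classical all_reals all_analysis.
Set Implicit Arguments. Unset Strict Implicit. Unset Printing Implicit Defensive.
Import Order.TTheory GRing.Theory Num.Theory.
Local Open Scope classical_set_scope.
Local Open Scope ring_scope.

Section Defs.
Variables (R : realType) (X A : finType).

Definition exp_util (w : A -> bool -> R) (a : A) (p : R) : R :=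
  (1 - p) * w a false + p * w a true.

Definition is_best_response (v u : A -> bool -> R) (br : R -> A) : Prop :=
  forall p, 0 <= p <= 1 ->
    (forall a, exp_util v a p <= exp_util v (br p) p) /\
    (forall a, exp_util v a p = exp_util v (br p) p ->
               exp_util u a p <= exp_util u (br p) p).

Definition bfun (br : R -> A) (p : R) (a : A) : R := if br p == a then 1 else 0.

Definition Jset (br : R -> A) (a : A) : set R := [set p | 0 <= p <= 1 /\ br p = a].

Definition is_interval_set (J : set R) : Prop :=
  forall p q r, J p -> J r -> p <= q -> q <= r -> J q.

(* length of an interval: sup of the distances between its points (0 if empty) *)
Definition len (J : set R) : R :=
  sup [set d | exists p q, J p /\ J q /\ d = q - p].

Definition thresholds (br : R -> A) : set R :=
  [set z | exists a a', a != a' /\ Jset br a !=set0 /\ Jset br a' !=set0 /\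
           z = sup (Jset br a) /\ z = inf (Jset br a')].

Definition Theta (D : X -> bool -> R) : set R :=
  [set t | exists x, t = D x true / (D x false + D x true)].

Definition S_eps (eps : R) (br : R -> A) (D : X -> bool -> R) : set R :=
  ([set t | exists k : nat, t = k%:R * eps] `&` [set t | 0 <= t <= 1])
  `|` thresholds br `|` Theta D.

Definition sender_util (D : X -> bool -> R) (u : A -> bool -> R) (br : R -> A)
  (g : X -> R) : R :=
  \sum_(x : X) \sum_(y : bool) D x y * \sum_(a : A) u a y * bfun br (g x) a.

Definition calib_term (D : X -> bool -> R) (br : R -> A) (g : X -> R) (a : A) : R :=
  \sum_(x : X) \sum_(y : bool) D x y * (((if y then 1 else 0) - g x) * bfun br (g x) a).

(* A randomized predictor is a random function h : Omega -> (X -> R) on a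
   probability space; it lies in Delta(H) when all its values lie in V. *)
Definition rand_predictor d (Omega : measurableType d) (h : Omega -> X -> R)
  (V : set R) : Prop :=
  (forall x, measurable_fun setT (fun w => h w x)) /\ (forall w x, V (h w x)).

Definition sender_value d (Omega : measurableType d) (P : probability Omega R)
  (D : X -> bool -> R) (u : A -> bool -> R) (br : R -> A) (h : Omega -> X -> R)
  : \bar R :=
  \int[P]_w (sender_util D u br (h w))%:E.

Definition decision_calibrated d (Omega : measurableType d) (P : probability Omega R)
  (D : X -> bool -> R) (br : R -> A) (h : Omega -> X -> R) (gamma : R) : Prop :=
  forall a : A, (`| \int[P]_w (calib_term D br (h w) a)%:E | <= gamma%:E)%E.

End Defs.

(* Round every prediction to the eps-grid, choosing for p in [k eps, (k+1) eps[
   the lower grid point k eps if the receiver's best response there is still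
   br p, and the upper one (k+1) eps otherwise.  Since the interval J_{br p}
   contains p but not k eps and is longer than eps, it contains (k+1) eps.
   Hence rounding preserves every best response, so the sender's utility is
   unchanged, and it moves each prediction by at most eps, which changes each
   calibration error E[(y - h(x)) b(h(x), a)] by at most eps. *)

From HB Require Import structures.
From mathcomp Require Import all_boot all_order all_algebra.
From mathcomp Require Import all_classical all_reals all_analysis.
From mathcomp Require Import lra ring measurable_realfun.
Set Implicit Arguments. Unset Strict Implicit. Unset Printing Implicit Defensive.
Import Order.TTheory GRing.Theory Num.Theory.
Local Open Scope classical_set_scope.
Local Open Scope ring_scope.

Lemma bounded_fun_le (T : Type) (R : realType) (f : T -> R) (M : R) :
  (forall x, `|f x| <= M) -> [bounded f x | x in setT].
Proof.
move=> fM; exists M; split; first exact: num_real.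
by move=> N MN x _; apply: le_trans (fM x) (ltW MN).
Qed.

Lemma abse_integral_le_perturb d (T : measurableType d) (R : realType)
    (P : probability T R) (f g : T -> R) (M e : R) :
  measurable_fun setT f -> measurable_fun setT g -> 0 <= e ->
  (forall w, `|f w| <= M) -> (forall w, `|g w - f w| <= e) ->
  (`|\int[P]_w (g w)%:E| <= `|\int[P]_w (f w)%:E| + e%:E)%E.
Proof.
move=> mf mg e0 fM gf.
have gM w : `|g w| <= M + e.
  rewrite -(subrK (f w) (g w)) addrC.
  exact: le_trans (ler_normD _ _) (lerD _ _).
have Pfin : (P setT < +oo)%E by rewrite probability_setT ltry.
have intf : P.-integrable setT (EFin \o f).
  by apply: measurable_bounded_integrable => //; exact: bounded_fun_le fM.
have intg : P.-integrable setT (EFin \o g).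
  by apply: measurable_bounded_integrable => //; exact: bounded_fun_le gM.
have mgf : measurable_fun setT (fun w => (g w)%:E - (f w)%:E)%E.
  by apply: emeasurable_funB; exact/measurable_EFinP.
have diff_le : (`|\int[P]_w (g w)%:E - \int[P]_w (f w)%:E| <= e%:E)%E.
  rewrite -integralB //; apply: le_trans (le_abse_integral P measurableT mgf) _.
  apply: le_trans (integral_le_bound e%:E measurableT mgf _ _) _.
  - by rewrite lee_fin.
  - by apply: aeW => w _; rewrite lee_fin.
  - by have /= -> := probability_setT P; rewrite mule1.
rewrite -(subeK (\int[P]_w (g w)%:E) (integrable_fin_num measurableT intf)).
by apply: le_trans (lee_abs_add _ _) _; rewrite addeC leeD2l.
Qed.

Lemma interval_mem_step (R : realType) (J : set R) (p c e : R) :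
  is_interval_set J -> J p -> e < len J -> c <= p -> p < c + e -> ~ J c ->
  J (c + e).
Proof.
move=> Jint Jp elen cp pce nJc.
have [p' [q [Jp' [Jq lt_e]]]] : exists p' q, J p' /\ J q /\ e < q - p'.
  apply: contrapT => nowide; move: elen; apply/negP; rewrite -leNgt.
  apply: ge_sup; first by exists 0, p, p; rewrite subrr.
  move=> _ [p' [q [Jp' [Jq ->]]]]; rewrite leNgt; apply/negP => lt_e.
  by apply: nowide; exists p', q.
have cp' : c < p'.
  by rewrite ltNge; apply/negP => p'c; apply: nJc; exact: (Jint p' c p).
by apply: (Jint p (c + e) q) => //; lra.
Qed.

Lemma in_Jset (R : realType) (A : finType) (br : R -> A) a p :
  0 <= p <= 1 -> (p \in Jset br a) = (br p == a).
Proof. by move=> p01; apply/idP/eqP => [|<-]; rewrite inE //; case. Qed.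

Lemma bfun_indic (R : realType) (A : finType) (br : R -> A) p a :
  0 <= p <= 1 -> bfun br p a = \1_(Jset br a) p.
Proof. by move=> p01; rewrite /bfun indicE in_Jset //; case: eqP. Qed.

Lemma measurable_Jset (R : realType) (A : finType) (br : R -> A) a :
  is_interval_set (Jset br a) -> measurable (Jset br a).
Proof.
move=> Jint; apply: is_interval_measurable => x y Jx Jy z /andP[].
exact: Jint.
Qed.

Section Rounding.
Variables (R : realType) (A : finType) (br : R -> A) (eps : R).
Hypothesis eps_gt0 : 0 < eps.
Hypothesis Jset_interval : forall a, is_interval_set (Jset br a).
Hypothesis Jset_long : forall a, eps < len (Jset br a).

(* The rounding rule of the header, written as a sum of indicators over the
   grid cells meeting [0, 1] so that its measurability is immediate. *)
Definition br_round (p : R) : R :=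
  \sum_(k < (Num.truncn eps^-1).+1)
    \1_(`[k%:R * eps, k.+1%:R * eps[%classic) p *
    (k%:R * eps + eps * (1 - \1_(Jset br (br (k%:R * eps))) p)).

Lemma br_roundE p : 0 <= p <= 1 ->
  let k := Num.truncn (p / eps) in
  [/\ k%:R * eps <= p, p < k.+1%:R * eps &
      br_round p = k%:R * eps + eps * (1 - \1_(Jset br (br (k%:R * eps))) p)].
Proof.
move=> /andP[p0 p1] k.
have /andP[k_le k_gt] := truncn_itv (divr_ge0 p0 (ltW eps_gt0)).
rewrite ler_pdivlMr // ltr_pdivrMr // in k_le k_gt.
have k_cell : (k < (Num.truncn eps^-1).+1)%N.
  rewrite ltnS truncn_le_nat; apply: le_lt_trans (truncnS_gt _).
  by rewrite -[leRHS]mul1r ler_wpM2r // invr_ge0 ltW.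
split => //; rewrite /br_round (bigD1 (Ordinal k_cell)) //= big1 ?addr0.
  by rewrite indicE mem_set ?mul1r //= in_itv /= k_le k_gt.
move=> j; rewrite -val_eqE /= indicE => /eqP jk.
rewrite memNset ?mul0r //= in_itv /= => /andP[j_le j_gt]; apply: jk.
by apply/esym/truncn_def; rewrite ler_pdivlMr // ltr_pdivrMr // j_le j_gt.
Qed.

Lemma br_round_spec p : 0 <= p <= 1 ->
  [/\ br (br_round p) = br p, `|br_round p - p| <= eps,
      0 <= br_round p <= 1 & exists n : nat, br_round p = n%:R * eps].
Proof.
move=> p01; have [c_le c_gt ->] := br_roundE p01.
set k := Num.truncn (p / eps) in c_le c_gt *.
rewrite mulrSr mulrDl mul1r in c_gt.
have c01 : 0 <= k%:R * eps <= 1.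
  rewrite mulr_ge0 ?ler0n ?(ltW eps_gt0) //= (le_trans c_le) //.
  by case/andP: p01.
rewrite indicE in_Jset //; case: eqP => [br_c | br_c].
  rewrite subrr mulr0 addr0; split => //; last by exists k.
  by rewrite ler_distlC; apply/andP; split; lra.
have Jp : Jset br (br p) p by [].
have nJc : ~ Jset br (br p) (k%:R * eps) by case=> _ /esym.
have [up01 br_up] := interval_mem_step (@Jset_interval (br p)) Jp
  (@Jset_long (br p)) c_le c_gt nJc.
rewrite subr0 mulr1; split => //.
  by rewrite ler_distlC; apply/andP; split; lra.
by exists k.+1; rewrite mulrSr mulrDl mul1r.
Qed.

Lemma br_round_measurable : measurable_fun setT br_round.
Proof.
apply: measurable_sum => k; apply: measurable_funM.
  by apply: measurable_indic; exact: measurable_itv.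
apply: measurable_funD; first exact: measurable_cst.
apply: measurable_funM; first exact: measurable_cst.
apply: measurable_funB; first exact: measurable_cst.
by apply: measurable_indic; exact: measurable_Jset.
Qed.

End Rounding.

Section PredictorFunctionals.
Variables (R : realType) (X A : finType) (D : X -> bool -> R) (br : R -> A).
Hypothesis D_ge0 : forall x y, 0 <= D x y.
Hypothesis D_sum1 : \sum_(x : X) \sum_(y : bool) D x y = 1.

Lemma sender_util_eq_br (u : A -> bool -> R) (g g' : X -> R) :
  (forall x, br (g' x) = br (g x)) ->
  sender_util D u br g' = sender_util D u br g.
Proof. by move=> brE; apply: eq_bigr => x _; rewrite /bfun brE. Qed.

Lemma norm_calib_term_le1 (g : X -> R) a :
  (forall x, 0 <= g x <= 1) -> `|calib_term D br g a| <= 1.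
Proof.
move=> g01; rewrite -D_sum1 /calib_term.
apply: le_trans (ler_norm_sum _ _ _) _; apply: ler_sum => x _.
apply: le_trans (ler_norm_sum _ _ _) _; apply: ler_sum => y _.
rewrite normrM ger0_norm // -[leRHS]mulr1 ler_wpM2l // normrM -[leRHS]mulr1.
have /andP[g0 g1] := g01 x.
apply: ler_pM => //.
  by case: y; rewrite ler_norml; apply/andP; split; lra.
by rewrite /bfun; case: eqP; rewrite ?normr1 ?normr0.
Qed.

Lemma calib_term_lipschitz (g g' : X -> R) a e :
  (forall x, br (g' x) = br (g x)) -> (forall x, `|g' x - g x| <= e) ->
  `|calib_term D br g' a - calib_term D br g a| <= e.
Proof.
move=> brE gg'.
have -> : e = \sum_(x : X) \sum_(y : bool) D x y * e.
  rewrite -[LHS]mul1r -D_sum1 mulr_suml.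
  by apply: eq_bigr => x _; rewrite mulr_suml.
rewrite /calib_term -sumrB.
apply: le_trans (ler_norm_sum _ _ _) _; apply: ler_sum => x _.
rewrite -sumrB.
apply: le_trans (ler_norm_sum _ _ _) _; apply: ler_sum => y _.
rewrite /bfun brE -mulrBr normrM ger0_norm // ler_wpM2l // -mulrBl normrM.
have -> t : t - g' x - (t - g x) = - (g' x - g x) by ring.
rewrite normrN -[leRHS]mulr1 ler_pM //.
by case: eqP; rewrite ?normr1 ?normr0.
Qed.

Lemma measurable_calib_term d (Omega : measurableType d)
    (g : Omega -> X -> R) a :
  is_interval_set (Jset br a) ->
  (forall x, measurable_fun setT (fun w => g w x)) ->
  (forall w x, 0 <= g w x <= 1) ->
  measurable_fun setT (fun w => calib_term D br (g w) a).
Proof.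
move=> Jint mg g01.
rewrite (_ : (fun w => _) = fun w => \sum_(x : X) \sum_(y : bool)
    D x y * ((y%:R - g w x) * \1_(Jset br a) (g w x))).
  apply: measurable_sum => x; apply: measurable_sum => y.
  apply: measurable_funM; first exact: measurable_cst.
  apply: measurable_funM; first exact: measurable_funB _ (mg x).
  apply: measurableT_comp (mg x).
  by apply: measurable_indic; exact: measurable_Jset.
apply/funext => w; apply: eq_bigr => x _; apply: eq_bigr => y _.
by rewrite bfun_indic //; case: y.
Qed.

End PredictorFunctionals.

Theorem theorem5 (R : realType) (X A : finType) (D : X -> bool -> R)
  (v u : A -> bool -> R) (br : R -> A) (eps gamma : R)
  (d : measure_display) (Omega : measurableType d) (P : probability Omega R)
  (h : Omega -> X -> R) :
  (forall x y, 0 <= D x y) ->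
  \sum_(x : X) \sum_(y : bool) D x y = 1 ->
  (forall a y, 0 <= v a y <= 1) ->
  (forall a y, 0 <= u a y <= 1) ->
  is_best_response v u br ->
  (forall a, is_interval_set (Jset br a)) ->
  0 < eps ->
  (forall a, eps < len (Jset br a)) ->
  rand_predictor h [set t | 0 <= t <= 1] ->
  decision_calibrated P D br h gamma ->
  exists (d' : measure_display) (Omega' : measurableType d')
         (P' : probability Omega' R) (h' : Omega' -> X -> R),
    rand_predictor h' (S_eps eps br D) /\
    sender_value P D u br h = sender_value P' D u br h' /\
    decision_calibrated P' D br h' (gamma + eps).
Proof.
move=> D0 D1 _ _ _ Jint eps_gt0 Jlen [mh h01] h_cal.
pose h' w x := br_round br eps (h w x).
have round w x := br_round_spec eps_gt0 Jint Jlen (h01 w x).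
have h'01 w x : 0 <= h' w x <= 1 by have [] := round w x.
have mh' x : measurable_fun setT (fun w => h' w x).
  exact: measurableT_comp (br_round_measurable eps Jint) (mh x).
exists d, Omega, P, h'; split; [split|split].
- exact: mh'.
- move=> w x; have [_ _ r01 [n rn]] := round w x.
  by left; left; split => //; exists n.
- apply: eq_integral => w _; congr (_%:E); apply/esym/sender_util_eq_br => x.
  by have [] := round w x.
move=> a; apply: le_trans (abse_integral_le_perturb P
    (measurable_calib_term D (Jint a) mh h01)
    (measurable_calib_term D (Jint a) mh' h'01) (ltW eps_gt0) _ _) _.
- by move=> w; apply: norm_calib_term_le1 => // x; exact: h01.
- by move=> w; apply: calib_term_lipschitz => // x; have [] := round w x.
- by rewrite -[(gamma + eps)%:E]/(gamma%:E + eps%:E)%E leeD2r //; apply: h_cal.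
Qed.
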